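(* For every prime $p$, the algebra $\mathbf{A}_p=(\mathbb{Z}_{p^2},+,0,-,(f_n)_{n\in\mathbb{N}})$ with $f_n(x_1,\ldots,x_n)=p\cdot x_1\cdots x_n$ satisfies: the congruence $[\mathbf{1},\mathbf{1}]$ is the congruence whose classes are the cosets of the subgroup $p\mathbb{Z}_{p^2}$, and $[\mathbf{1},[\mathbf{1},\mathbf{1}]]=\mathbf{0}$ (so $\mathbf{A}_p$ is nilpotent); moreover, for every $n\ge1$ the operation $f_n$ is a $0$-absorbing polynomial that is not constantly $0$, and $\mathbf{A}_p$ is not supernilpotent, i.e. $[\mathbf{1},\ldots,\mathbf{1}]\neq\mathbf{0}$ for every number of entries.
   Context: $\mathbf{1}$ denotes the total relation and $\mathbf{0}$ the identity relation on $\mathbb{Z}_{p^2}$. For congruences $\alpha_1,\ldots,\alpha_n$, the (higher) commutator $[\alpha_1,\ldots,\alpha_n]$ is the smallest congruence $\delta$ such that for all polynomials $f(\bar x_1,\ldots,\bar x_n)$ and tuples $\bar a_i\equiv_{\alpha_i}\bar b_i$: if $f(\bar a_1,\bar x_2,\ldots,\bar x_n)\equiv_\delta f(\bar b_1,\bar x_2,\ldots,\bar x_n)$ for all $(\bar x_2,\ldots,\bar x_n)\in\prod_{i=2}^n\{\bar a_i,\bar b_i\}\setminus\{(\bar b_2,\ldots,\bar b_n)\}$, then $f(\bar a_1,\bar b_2,\ldots,\bar b_n)\equiv_\delta f(\bar b_1,\bar b_2,\ldots,\bar b_n)$. A polynomial $g(x_1,\ldots,x_k)$ is $0$-absorbing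 if $g(y_1,\ldots,y_k)=0$ whenever some $y_i=0$. An algebra is supernilpotent if $[\mathbf{1},\ldots,\mathbf{1}]$ ($n+1$ entries) equals $\mathbf{0}$ for some $n$. *)

From HB Require Import structures.
From mathcomp Require Import all_boot all_order all_algebra.
Set Implicit Arguments. Unset Strict Implicit. Unset Printing Implicit Defensive.
Import GRing.Theory.
Local Open Scope ring_scope.

Definition Ap (p : nat) : Type := 'Z_(p ^ 2).

Definition fop (p n : nat) (x : 'I_n -> Ap p) : Ap p :=
  p%:R * \prod_(i < n) x i.

Inductive is_poly (p : nat) (E : Type) : ((E -> Ap p) -> Ap p) -> Prop :=
| P_var (e : E) : is_poly (fun env => env e)
| P_const (c : Ap p) : is_poly (fun _ => c)
| P_zero : is_poly (fun _ => 0)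
| P_add f g : is_poly f -> is_poly g -> is_poly (fun env => f env + g env)
| P_opp f : is_poly f -> is_poly (fun env => - f env)
| P_fop (n : nat) (fs : 'I_n -> (E -> Ap p) -> Ap p) :
    (forall i, is_poly (fs i)) ->
    is_poly (fun env => fop (fun i => fs i env)).

Definition Rel (p : nat) := Ap p -> Ap p -> Prop.

Definition is_congruence (p : nat) (th : Rel p) : Prop :=
  [/\ (forall x, th x x),
      (forall x y, th x y -> th y x) /\
      (forall x y z, th x y -> th y z -> th x z),
      (forall x1 x2 y1 y2, th x1 y1 -> th x2 y2 -> th (x1 + x2) (y1 + y2)),
      (forall x y, th x y -> th (- x) (- y)) &
      (forall n (x y : 'I_n -> Ap p), (forall i, th (x i) (y i)) ->
         th (fop x) (fop y))].

Definition total_rel (p : nat) : Rel p := fun _ _ => True.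
Definition id_rel (p : nat) : Rel p := fun x y => x = y.

Definition sel (p n : nat) (c : 'I_n -> bool) (a b : 'I_n -> nat -> Ap p)
  : ('I_n * nat) -> Ap p :=
  fun ij => if c ij.1 then b ij.1 ij.2 else a ij.1 ij.2.

Definition set_first (n : nat) (v : bool) (c : 'I_n -> bool) : 'I_n -> bool :=
  fun i => if val i == 0%N then v else c i.

(* The term condition: delta satisfies the n-ary term condition for
   alphas = [alpha_1; ...; alpha_n]. Tuples are indexed by nat (a polynomial
   only depends on finitely many variables). *)
Definition term_cond (p : nat) (alphas : seq (Rel p)) (delta : Rel p) : Prop :=
  let n := size alphas in
  forall (f : (('I_n * nat) -> Ap p) -> Ap p), is_poly f ->
  forall a b : 'I_n -> nat -> Ap p,
    (forall (i : 'I_n) j, nth (@total_rel p) alphas i (a i j) (b i j)) ->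
    (forall c : 'I_n -> bool, (exists i : 'I_n, val i != 0%N /\ c i = false) ->
       delta (f (sel (set_first false c) a b)) (f (sel (set_first true c) a b))) ->
    delta (f (sel (set_first false (fun _ => true)) a b))
          (f (sel (set_first true (fun _ => true)) a b)).

(* The higher commutator [alpha_1,...,alpha_n]: the smallest congruence
   satisfying the term condition, i.e. the intersection of all of them. *)
Definition commutator (p : nat) (alphas : seq (Rel p)) : Rel p :=
  fun x y => forall delta, is_congruence delta -> term_cond alphas delta -> delta x y.

Definition rel_eq (p : nat) (r s : Rel p) : Prop := forall x y, r x y <-> s x y.

Definition coset_rel (p : nat) : Rel p := fun x y => exists z : Ap p, x - y = p%:R * z.

Definition zero_absorbing (p : nat) (E : Type) (g : (E -> Ap p) -> Ap p) : Prop :=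
  forall y : E -> Ap p, (exists i, y i = 0) -> g y = 0.

Definition supernilpotent (p : nat) : Prop :=
  exists n : nat, (1 <= n)%N /\ rel_eq (commutator (nseq n.+1 (@total_rel p))) (@id_rel p).

From mathcomp Require Import all_boot all_order all_algebra.
From mathcomp Require Import ring.
Import GRing.Theory.
Set Implicit Arguments. Unset Strict Implicit. Unset Printing Implicit Defensive.
Local Open Scope ring_scope.

(* Upper bounds: every polynomial f is affine modulo p, i.e. f e1 + f e4 and
   f e2 + f e3 are congruent mod p whenever e1 + e4 = e2 + e3; if moreover
   e1, e3 and e2, e4 are congruent mod p, the two sides are equal, because
   every f_n multiplies by p.  This yields the term conditions for the coset
   congruence and for the identity.  Lower bound: applying the term condition
   to f_n itself, with one block equal to 0, forces p * b_1 * ... * b_n into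
   every commutator of total relations; for n = 2 this gives all of
   p Z_{p^2}, and for all b_i = 1 it gives p <> 0. *)

Lemma poly_congruence (p : nat) (E : Type) (th : Rel p) (f : (E -> Ap p) -> Ap p) :
  is_congruence th -> is_poly f ->
  forall e1 e2, (forall x, th (e1 x) (e2 x)) -> th (f e1) (f e2).
Proof.
case=> th_refl _ th_add th_opp th_fop; elim=> //=.
- by move=> f1 g1 _ IH1 _ IH2 e1 e2 th_e; apply: th_add; [apply: IH1 | apply: IH2].
- by move=> f1 _ IH e1 e2 th_e; apply/th_opp/IH.
- by move=> n fs _ IH e1 e2 th_e; apply: th_fop => i; apply: IH.
Qed.

Lemma id_rel_congruence (p : nat) : is_congruence (@id_rel p).
Proof.
split=> //.
- by split=> [x y -> | x y z -> ->].
- by move=> x1 x2 y1 y2 -> ->.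
- by move=> x y ->.
- by move=> n x y eq_xy; rewrite /fop; congr (_ * _); apply: eq_bigr => i _; apply: eq_xy.
Qed.

Section Ap.

Variable p : nat.
Hypothesis p_prime : prime p.

Lemma expp2_gt1 : (1 < p ^ 2)%N.
Proof. by rewrite -(expn0 p) ltn_exp2l // prime_gt1. Qed.

Lemma natp_mulpp : (p%:R * p%:R : Ap p) = 0.
Proof. by rewrite -natrM mulnn pchar_Zp // expp2_gt1. Qed.

Lemma natp_neq0 : (p%:R : Ap p) != 0.
Proof.
have p_gt1 := prime_gt1 p_prime.
apply/eqP => /(congr1 val); rewrite /= val_Zp_nat ?expp2_gt1 // modn_small.
  by move/eqP; rewrite gtn_eqF // ltnW.
by rewrite -{1}(expn1 p) ltn_exp2l.
Qed.

Lemma coset_rel_congruence : is_congruence (@coset_rel p).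
Proof.
split.
- by move=> x; exists 0; rewrite subrr mulr0.
- split.
  + by move=> x y [z xy]; exists (- z); rewrite mulrN -xy opprB.
  + by move=> x y z [z1 xy] [z2 yz]; exists (z1 + z2); rewrite mulrDr -xy -yz; ring.
- by move=> x1 x2 y1 y2 [z1 xy1] [z2 xy2]; exists (z1 + z2); rewrite mulrDr -xy1 -xy2; ring.
- by move=> x y [z xy]; exists (- z); rewrite mulrN -xy; ring.
- by move=> n x y _; exists (\prod_i x i - \prod_i y i); rewrite /fop mulrBr.
Qed.

Lemma coset_relM x1 x2 y1 y2 : coset_rel x1 y1 -> coset_rel x2 y2 ->
  coset_rel (x1 * x2 : Ap p) (y1 * y2).
Proof.
move=> [z1 xy1] [z2 xy2]; exists (z1 * x2 + y1 * z2).
have -> : x1 * x2 - y1 * y2 = (x1 - y1) * x2 + y1 * (x2 - y2) by ring.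
by rewrite xy1 xy2; ring.
Qed.

Lemma coset_rel_mulp (x y : Ap p) : coset_rel x y -> p%:R * x = p%:R * y.
Proof.
move=> [z xy]; apply/eqP; rewrite -subr_eq0 -mulrBr xy.
by rewrite mulrA natp_mulpp mul0r.
Qed.

Lemma poly_affine_coset (E : Type) (f : (E -> Ap p) -> Ap p) : is_poly f ->
  forall e1 e2 e3 e4, (forall x, e1 x + e4 x = e2 x + e3 x) ->
  coset_rel (f e1 + f e4) (f e2 + f e3).
Proof.
elim=> /=.
- by move=> e e1 e2 e3 e4 sq; exists 0; rewrite sq subrr mulr0.
- by move=> c e1 e2 e3 e4 _; exists 0; rewrite subrr mulr0.
- by move=> e1 e2 e3 e4 _; exists 0; rewrite subrr mulr0.
- move=> f1 g1 _ IH1 _ IH2 e1 e2 e3 e4 sq.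
  have [z1 eq1] := IH1 _ _ _ _ sq; have [z2 eq2] := IH2 _ _ _ _ sq.
  by exists (z1 + z2); rewrite mulrDr -eq1 -eq2; ring.
- move=> f1 _ IH e1 e2 e3 e4 sq.
  have [z eq1] := IH _ _ _ _ sq.
  by exists (- z); rewrite mulrN -eq1; ring.
- move=> n fs _ _ e1 e2 e3 e4 _.
  exists (\prod_i fs i e1 + \prod_i fs i e4 - \prod_i fs i e2 - \prod_i fs i e3).
  by rewrite /fop; ring.
Qed.

Lemma poly_affine (E : Type) (f : (E -> Ap p) -> Ap p) : is_poly f ->
  forall e1 e2 e3 e4, (forall x, e1 x + e4 x = e2 x + e3 x) ->
  (forall x, coset_rel (e1 x) (e3 x)) -> (forall x, coset_rel (e2 x) (e4 x)) ->
  f e1 + f e4 = f e2 + f e3.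
Proof.
have fop_coset n (fs : 'I_n -> (E -> Ap p) -> Ap p) e e' :
    (forall i, is_poly (fs i)) -> (forall x, coset_rel (e x) (e' x)) ->
    p%:R * \prod_i fs i e = p%:R * \prod_i fs i e'.
  move=> fs_poly ee'; apply: coset_rel_mulp; apply: (big_ind2 (@coset_rel p)).
  - by case: coset_rel_congruence.
  - by move=> x1 x2 y1 y2; apply: coset_relM.
  - by move=> i _; apply: (poly_congruence coset_rel_congruence (fs_poly i)).
elim=> /=.
- by [].
- by move=> *; rewrite addrC.
- by move=> *; rewrite !addr0.
- move=> f1 g1 _ IH1 _ IH2 e1 e2 e3 e4 sq c13 c24.
  have eq1 := IH1 _ _ _ _ sq c13 c24; have eq2 := IH2 _ _ _ _ sq c13 c24.
  have -> : f1 e1 + g1 e1 + (f1 e4 + g1 e4) = (f1 e1 + f1 e4) + (g1 e1 + g1 e4).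
    by ring.
  by rewrite eq1 eq2; ring.
- by move=> f1 _ IH e1 e2 e3 e4 sq c13 c24; rewrite -!opprD (IH _ _ _ _ sq c13 c24).
- move=> n fs fs_poly _ e1 e2 e3 e4 _ c13 c24.
  by rewrite /fop (fop_coset _ _ _ _ fs_poly c13) (fop_coset _ _ _ _ fs_poly c24) addrC.
Qed.

Lemma sel_set_first_square n (a b : 'I_n -> nat -> Ap p) x :
  sel (set_first false (fun=> false)) a b x + sel (set_first true (fun=> true)) a b x =
  sel (set_first true (fun=> false)) a b x + sel (set_first false (fun=> true)) a b x.
Proof. by case: x => i j; rewrite /sel /set_first /=; case: (val i == 0%N); rewrite /= addrC. Qed.

Lemma sel_set_first_rel n (th : Rel p) v (a b : 'I_n -> nat -> Ap p) x :
  (forall y, th y y) -> (forall (i : 'I_n) j, val i != 0%N -> th (a i j) (b i j)) ->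
  th (sel (set_first v (fun=> false)) a b x) (sel (set_first v (fun=> true)) a b x).
Proof.
by move=> th_refl th_ab; case: x => i j; rewrite /sel /set_first /=; case: eqP => [|/eqP]; auto.
Qed.

Lemma term_cond_total_fop (alphas : seq (Rel p)) delta (b : 'I_(size alphas) -> Ap p) :
  (forall (i : nat) x y, nth (@total_rel p) alphas i x y) -> (0 < size alphas)%N ->
  is_congruence delta -> term_cond alphas delta ->
  delta 0 (p%:R * \prod_i b i).
Proof.
move=> alphas_total alphas_gt0 [delta_refl _ _ _ _] tc.
pose f (env : 'I_(size alphas) * nat -> Ap p) := fop (fun i => env (i, 0%N)).
have f_poly : is_poly f by apply: P_fop => i; apply: P_var.
pose a (i : 'I_(size alphas)) (_ : nat) : Ap p := 0.
pose b' i (_ : nat) := b i.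
have f_zero v (c : 'I_(size alphas) -> bool) i :
    val i != 0%N -> c i = false -> f (sel (set_first v c) a b') = 0.
  move=> i_neq0 ci; rewrite /f /fop (bigD1 i) //= /sel /set_first /=.
  by rewrite (negbTE i_neq0) ci mul0r mulr0.
have := tc f f_poly a b' (fun i j => alphas_total i _ _).
have -> : f (sel (set_first false (fun=> true)) a b') = 0.
  by rewrite /f /fop (bigD1 (Ordinal alphas_gt0)) //= /sel /set_first /= mul0r mulr0.
have -> : f (sel (set_first true (fun=> true)) a b') = p%:R * \prod_i b i.
  by rewrite /f /fop; congr (_ * _); apply: eq_bigr => i _; rewrite /sel /set_first /= if_same.
apply=> c [i [i_neq0 ci]].
by rewrite (f_zero false c i) // (f_zero true c i).
Qed.

Lemma nth_nseq_total n (i : nat) x y : nth (@total_rel p) (nseq n (@total_rel p)) i x y.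
Proof. by rewrite nth_nseq if_same. Qed.

Lemma term_cond_coset : term_cond [:: @total_rel p; @total_rel p] (@coset_rel p).
Proof.
move=> f f_poly a b _ tc_hyp.
have [z1 eq1] := tc_hyp (fun=> false) (ex_intro _ ord_max (conj isT erefl)).
have [z2 eq2] := poly_affine_coset f_poly (sel_set_first_square a b).
by exists (z1 - z2); rewrite mulrBr -eq1 -eq2; ring.
Qed.

Lemma commutator_total2 : rel_eq (commutator [:: @total_rel p; @total_rel p]) (@coset_rel p).
Proof.
move=> x y; split=> [|[z xy] delta delta_cong tc].
  by apply; [apply: coset_rel_congruence | apply: term_cond_coset].
have := term_cond_total_fop (fun i => if val i == 0%N then z else 1)
  (@nth_nseq_total 2) isT delta_cong tc.
rewrite big_ord_recr big_ord1 /= mulr1 -xy.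
case: delta_cong => delta_refl [delta_sym _] delta_add _ _ delta_0.
by apply: delta_sym; move: (delta_add _ _ _ _ delta_0 (delta_refl y)); rewrite add0r subrK.
Qed.

Lemma term_cond_id :
  term_cond [:: @total_rel p; commutator [:: @total_rel p; @total_rel p]] (@id_rel p).
Proof.
move=> f f_poly a b ab tc_hyp.
have eq1 := tc_hyp (fun=> false) (ex_intro _ ord_max (conj isT erefl)).
have ab_coset (i : 'I_2) j : val i != 0%N -> coset_rel (a i j) (b i j).
  case: i => [[|[|k]] i_lt2] //= _.
  by apply/commutator_total2; apply: (ab (Ordinal i_lt2)).
have coset_refl : forall y : Ap p, coset_rel y y by case: coset_rel_congruence.
have := poly_affine f_poly (sel_set_first_square a b)
  (fun x => sel_set_first_rel false x coset_refl ab_coset)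
  (fun x => sel_set_first_rel true x coset_refl ab_coset).
by rewrite eq1 => /addrI.
Qed.

Lemma commutator_total_commutator_total2 :
  rel_eq (commutator [:: @total_rel p; commutator [:: @total_rel p; @total_rel p]])
         (@id_rel p).
Proof.
move=> x y; split; first by apply; [apply: id_rel_congruence | apply: term_cond_id].
by move=> -> delta [delta_refl _ _ _ _].
Qed.

Lemma commutator_total_neq_id n : (1 <= n)%N ->
  ~ rel_eq (commutator (nseq n (@total_rel p))) (@id_rel p).
Proof.
move=> n_gt0 comm_id.
have : commutator (nseq n (@total_rel p)) 0 (p%:R * \prod_(i < size (nseq n (@total_rel p))) 1).
  move=> delta delta_cong tc.
  by apply: term_cond_total_fop; rewrite ?size_nseq //; apply: nth_nseq_total.
move/comm_id; rewrite /id_rel big1_eq mulr1 => /esym/eqP.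
by rewrite (negbTE natp_neq0).
Qed.

End Ap.

Lemma fop_poly (p n : nat) : is_poly (fun x : 'I_n -> Ap p => fop x).
Proof. by apply: (@P_fop p 'I_n n (fun i env => env i)) => i; apply: P_var. Qed.

Lemma fop_zero_absorbing (p n : nat) : zero_absorbing (fun x : 'I_n -> Ap p => fop x).
Proof. by move=> y [i yi]; rewrite /fop (bigD1 i) //= yi mul0r mulr0. Qed.

Theorem mainTheorem6 (p : nat) (hp : prime p) :
  [/\ rel_eq (commutator [:: @total_rel p; @total_rel p]) (@coset_rel p),
      rel_eq (commutator [:: @total_rel p;
                             commutator [:: @total_rel p; @total_rel p]]) (@id_rel p),
      (forall n : nat, (1 <= n)%N ->
         [/\ is_poly (fun x : 'I_n -> Ap p => fop x),
             zero_absorbing (fun x : 'I_n -> Ap p => fop x) &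
             exists x : 'I_n -> Ap p, fop x <> 0]),
      ~ supernilpotent p &
      (forall n : nat, (1 <= n)%N ->
         ~ rel_eq (commutator (nseq n (@total_rel p))) (@id_rel p))].
Proof.
split.
- exact: commutator_total2.
- exact: commutator_total_commutator_total2.
- move=> n _; split; [exact: fop_poly | exact: fop_zero_absorbing |].
  by exists (fun=> 1); rewrite /fop big1_eq mulr1; apply/eqP; apply: natp_neq0.
- by move=> [n [_ comm_id]]; apply: (commutator_total_neq_id hp (ltn0Sn n) comm_id).
- exact: commutator_total_neq_id.
Qed.
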